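(* Let $\mathcal{B}=\{(b,m): m>1,\ b\in B_m\}$. Let $\cong$ be the equivalence relation on $\mathcal{B}$ generated by: (1) for $m>1$ and $a,b\in B_m$, $(b,m)\cong(aba^{-1},m)$; (2) for $m>1$ and any word $\prod_{k=1}^{\ell}\sigma_{i_k}^{\epsilon_k}$ with $1\le i_k\le m-1$, $\epsilon_k\in\{1,-1\}$, $\left(\prod_{k=1}^{\ell}\sigma_{i_k}^{\epsilon_k},m\right)\cong\left(\sigma_1\prod_{k=1}^{\ell}\sigma_{i_k+1}^{\epsilon_k},m+1\right)$; (3) for such words, $\left(\prod_{k=1}^{\ell}\sigma_{i_k}^{\epsilon_k},m\right)\cong\left(\sigma_1^{-1}\prod_{k=1}^{\ell}\sigma_{i_k+1}^{\epsilon_k},m+1\right)$. Then $\cong$ coincides with the Markov equivalence $\sim$ on $\mathcal{B}$.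
   Context: For $n\ge 2$, $B_n$ is the braid group with generators $\sigma_1,\dots,\sigma_{n-1}$ and relations $\sigma_i\sigma_j=\sigma_j\sigma_i$ for $|i-j|\ge 2$ and $\sigma_i\sigma_{i+1}\sigma_i=\sigma_{i+1}\sigma_i\sigma_{i+1}$. For $m<n$, $B_m$ is identified with its image in $B_n$ under the homomorphism sending $\sigma_i\mapsto\sigma_i$. The Markov equivalence $\sim$ on $\mathcal{B}$ is the equivalence relation generated by: $(b,m)\sim(aba^{-1},m)$ for $a,b\in B_m$; $(b,m)\sim(\sigma_m b,m+1)$ for $b\in B_m$; $(b,m)\sim(\sigma_m^{-1}b,m+1)$ for $b\in B_m$. *)

(* Braid groups B_n given by their standard presentation:
   elements of B_n are braid words in sigma_1^{+-1},...,sigma_{n-1}^{+-1}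
   modulo the congruence generated by free cancellation and the braid
   relations. A pair (b,m) in \mathcal{B} is represented by (w,m) with w a
   word in the generators of B_m; equality in B_m is [braid_eq m]. *)
From Stdlib Require Import List Arith Relations.
Import ListNotations.

(* a letter (i, true) is sigma_i, (i, false) is sigma_i^{-1} *)
Definition letter : Type := (nat * bool)%type.
Definition word : Type := list letter.

Definition gen_ok (n : nat) (x : letter) : Prop := 1 <= fst x /\ fst x < n.
Definition word_ok (n : nat) (w : word) : Prop := Forall (gen_ok n) w.

Definition linv (x : letter) : letter := (fst x, negb (snd x)).
Definition winv (w : word) : word := rev (map linv w).

Inductive braid_step (n : nat) : word -> word -> Prop :=
| bs_cancel : forall (u v : word) (x : letter),
    word_ok n u -> word_ok n v -> gen_ok n x ->
    braid_step n (u ++ x :: linv x :: v) (u ++ v)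
| bs_comm : forall (u v : word) (i j : nat),
    word_ok n u -> word_ok n v -> 1 <= i -> i < n -> 1 <= j -> j < n ->
    (i + 2 <= j \/ j + 2 <= i) ->
    braid_step n (u ++ (i, true) :: (j, true) :: v)
                 (u ++ (j, true) :: (i, true) :: v)
| bs_braid : forall (u v : word) (i : nat),
    word_ok n u -> word_ok n v -> 1 <= i -> i + 1 < n ->
    braid_step n (u ++ (i, true) :: (i + 1, true) :: (i, true) :: v)
                 (u ++ (i + 1, true) :: (i, true) :: (i + 1, true) :: v).

Definition braid_eq (n : nat) : relation word :=
  clos_refl_sym_trans word (braid_step n).

Definition BB (p : word * nat) : Prop := 1 < snd p /\ word_ok (snd p) (fst p).

Definition wshift (w : word) : word := map (fun x => (S (fst x), snd x)) w.

Inductive markov_step : word * nat -> word * nat -> Prop :=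
| ms_eq : forall m w w', 1 < m -> word_ok m w -> word_ok m w' ->
    braid_eq m w w' -> markov_step (w, m) (w', m)
| ms_conj : forall m a b, 1 < m -> word_ok m a -> word_ok m b ->
    markov_step (b, m) (a ++ b ++ winv a, m)
| ms_stab_pos : forall m b, 1 < m -> word_ok m b ->
    markov_step (b, m) ((m, true) :: b, m + 1)
| ms_stab_neg : forall m b, 1 < m -> word_ok m b ->
    markov_step (b, m) ((m, false) :: b, m + 1).

Definition markov_equiv : relation (word * nat) :=
  clos_refl_sym_trans _ markov_step.

Inductive cong_step : word * nat -> word * nat -> Prop :=
| cs_eq : forall m w w', 1 < m -> word_ok m w -> word_ok m w' ->
    braid_eq m w w' -> cong_step (w, m) (w', m)
| cs_conj : forall m a b, 1 < m -> word_ok m a -> word_ok m b ->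
    cong_step (b, m) (a ++ b ++ winv a, m)
| cs_stab_pos : forall m w, 1 < m -> word_ok m w ->
    cong_step (w, m) ((1, true) :: wshift w, m + 1)
| cs_stab_neg : forall m w, 1 < m -> word_ok m w ->
    cong_step (w, m) ((1, false) :: wshift w, m + 1).

Definition cong_equiv : relation (word * nat) :=
  clos_refl_sym_trans _ cong_step.

From Stdlib Require Import List Arith Relations Lia Setoid.
Import ListNotations.

(* Both relations contain equality in B_m and conjugation, so it suffices to
   obtain each kind of stabilization from the other up to conjugation.  Put
   δ = σ_{m-1}⋯σ_1 ∈ B_m and Δ = σ_m⋯σ_1 ∈ B_{m+1}.  Then w Δ = Δ shift(w)
   for w ∈ B_m, and σ_m δΔ = δΔ σ_1 (both sides equal Δ²), so conjugating
   σ_1^{±1} shift(w) by δΔ gives σ_m^{±1} δ w δ^{-1}: a shifted stabilization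
   of w is conjugate to a Markov stabilization of a conjugate of w. *)

Lemma clos_rst_map {A B : Type} (R : relation A) (R' : relation B) (f : A -> B) :
  (forall x y, R x y -> clos_refl_sym_trans B R' (f x) (f y)) ->
  forall x y, clos_refl_sym_trans A R x y -> clos_refl_sym_trans B R' (f x) (f y).
Proof. intros HR x y H; induction H; eauto using clos_refl_sym_trans. Qed.

#[local] Instance braid_eq_Equivalence n : Equivalence (braid_eq n).
Proof.
  split; red; intros.
  - apply rst_refl.
  - now apply rst_sym.
  - eapply rst_trans; eassumption.
Qed.

Lemma gen_ok_linv n x : gen_ok n x -> gen_ok n (linv x).
Proof. now destruct x. Qed.

Lemma word_ok_app n u v : word_ok n u -> word_ok n v -> word_ok n (u ++ v).
Proof. intros; apply Forall_app; auto. Qed.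

Lemma word_ok_mono n n' w : n <= n' -> word_ok n w -> word_ok n' w.
Proof.
  intros Hn; apply Forall_impl; intros x [H1 H2]; split; lia.
Qed.

Lemma word_ok_winv n w : word_ok n w -> word_ok n (winv w).
Proof. intros; apply Forall_rev, Forall_map, (Forall_impl _ (gen_ok_linv n)); auto. Qed.

Lemma word_ok_wshift n w : word_ok n w -> word_ok (S n) (wshift w).
Proof.
  intros; apply Forall_map; eapply Forall_impl; [|eassumption].
  intros x [H1 H2]; split; simpl; lia.
Qed.

Lemma linv_involutive x : linv (linv x) = x.
Proof. destruct x; unfold linv; simpl; now rewrite Bool.negb_involutive. Qed.

Lemma winv_app u v : winv (u ++ v) = winv v ++ winv u.
Proof. unfold winv; now rewrite map_app, rev_app_distr. Qed.

Lemma winv_involutive w : winv (winv w) = w.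
Proof.
  unfold winv; rewrite map_rev, rev_involutive, map_map.
  rewrite <- map_id; apply map_ext, linv_involutive.
Qed.

Fixpoint delta (k : nat) : word :=
  match k with 0 => [] | S k' => (S k', true) :: delta k' end.

Lemma word_ok_delta n k : k < n -> word_ok n (delta k).
Proof.
  induction k; intros; constructor; [split; simpl; lia | apply IHk; lia].
Qed.

Ltac word_ok :=
  repeat first
    [ assumption
    | apply word_ok_app | apply word_ok_winv | apply Forall_cons | apply Forall_nil
    | apply word_ok_delta; lia
    | apply gen_ok_linv
    | split; simpl; lia
    | eapply word_ok_mono; [|eassumption]; lia
    | eapply word_ok_mono; [|apply word_ok_wshift; eassumption]; lia
    | lia ].

Lemma braid_eq_app_l n p u v : word_ok n p -> braid_eq n u v -> braid_eq n (p ++ u) (p ++ v).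
Proof.
  intros Hp; apply (clos_rst_map _ _ (app p)); intros x y [];
    apply rst_step; rewrite !app_assoc; constructor; word_ok.
Qed.

Lemma braid_eq_app_r n p u v : word_ok n p -> braid_eq n u v -> braid_eq n (u ++ p) (v ++ p).
Proof.
  intros Hp; apply (clos_rst_map _ _ (fun w => w ++ p)); intros x y [];
    apply rst_step; rewrite <- !app_assoc; constructor; word_ok.
Qed.

Lemma braid_eq_cons n x u v : gen_ok n x -> braid_eq n u v -> braid_eq n (x :: u) (x :: v).
Proof. intros; apply (braid_eq_app_l n [x]); word_ok. Qed.

Lemma braid_eq_cancel n x v : gen_ok n x -> word_ok n v -> braid_eq n (x :: linv x :: v) v.
Proof. intros; apply rst_step, (bs_cancel n [] v x); word_ok. Qed.

Lemma braid_eq_cancel_winv n u w v : word_ok n u -> word_ok n w -> word_ok n v ->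
  braid_eq n (u ++ w ++ winv w ++ v) (u ++ v).
Proof.
  intros Hu Hw Hv; apply braid_eq_app_l; auto.
  revert v Hv; induction w as [|x w IH]; intros v Hv; simpl; [reflexivity|].
  inversion_clear Hw.
  unfold winv; simpl; fold (winv w); rewrite <- !app_assoc; simpl.
  transitivity (x :: linv x :: v).
  - apply braid_eq_cons, IH; word_ok.
  - now apply braid_eq_cancel.
Qed.

Lemma braid_eq_comm n i j v : 1 <= i < n -> 1 <= j < n -> i + 2 <= j \/ j + 2 <= i ->
  word_ok n v -> braid_eq n ((i, true) :: (j, true) :: v) ((j, true) :: (i, true) :: v).
Proof. intros; apply rst_step, (bs_comm n [] v); simpl; word_ok; lia. Qed.

Lemma braid_eq_braid n i v : 1 <= i -> i + 1 < n -> word_ok n v ->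
  braid_eq n ((i, true) :: (S i, true) :: (i, true) :: v)
             ((S i, true) :: (i, true) :: (S i, true) :: v).
Proof.
  intros; rewrite <- Nat.add_1_r; apply rst_step, (bs_braid n [] v); word_ok.
Qed.

Lemma braid_eq_linv_conj n x y u : gen_ok n x -> gen_ok n y -> word_ok n u ->
  braid_eq n (x :: u) (u ++ [y]) -> braid_eq n (linv x :: u) (u ++ [linv y]).
Proof.
  intros Hx Hy Hu H.
  transitivity (linv x :: (u ++ [y]) ++ [linv y]).
  { apply braid_eq_cons; [word_ok|].
    rewrite <- app_assoc, <- (app_nil_r u) at 1.
    apply braid_eq_app_l; [word_ok|]; symmetry; apply braid_eq_cancel; word_ok. }
  transitivity (linv x :: (x :: u) ++ [linv y]).
  { apply braid_eq_cons, braid_eq_app_r; [word_ok..|]; now symmetry. }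
  simpl; rewrite <- (linv_involutive x) at 2; apply braid_eq_cancel; word_ok.
Qed.

Lemma braid_eq_push_word n f u w : word_ok n u -> word_ok n w -> word_ok n (map f w) ->
  (forall x, In x w -> braid_eq n (x :: u) (u ++ [f x])) ->
  braid_eq n (w ++ u) (u ++ map f w).
Proof.
  induction w as [|x w IH]; intros Hu Hw Hfw H; simpl.
  - now rewrite app_nil_r.
  - inversion_clear Hw; inversion_clear Hfw.
    transitivity ((x :: u) ++ map f w).
    { apply braid_eq_cons; auto; apply IH; auto using in_cons. }
    transitivity ((u ++ [f x]) ++ map f w).
    { apply braid_eq_app_r; [word_ok|]; apply H, in_eq. }
    now rewrite <- app_assoc.
Qed.

Lemma delta_far_comm n k j : k + 2 <= j -> j < n ->
  braid_eq n (delta k ++ [(j, true)]) ((j, true) :: delta k).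
Proof.
  induction k; intros; simpl; [reflexivity|].
  transitivity ((S k, true) :: (j, true) :: delta k).
  - apply braid_eq_cons, IHk; word_ok.
  - apply braid_eq_comm; word_ok.
Qed.

Lemma sigma_delta n k i : k < n -> 1 <= i < k ->
  braid_eq n ((i, true) :: delta k) (delta k ++ [(S i, true)]).
Proof.
  induction k as [|k IH]; intros Hk Hi; [lia|]; simpl.
  destruct (Nat.eq_dec i k) as [->|Hne].
  - destruct k as [|k]; [lia|]; simpl.
    transitivity ((S (S k), true) :: (S k, true) :: (S (S k), true) :: delta k).
    { apply braid_eq_braid; word_ok. }
    do 2 (apply braid_eq_cons; [word_ok|]).
    symmetry; apply delta_far_comm; lia.
  - transitivity ((S k, true) :: (i, true) :: delta k).
    { apply braid_eq_comm; word_ok. }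
    apply braid_eq_cons, IH; word_ok.
Qed.

Lemma letter_delta n k x : k < n -> gen_ok k x ->
  braid_eq n (x :: delta k) (delta k ++ [(S (fst x), snd x)]).
Proof.
  destruct x as [i []]; intros Hk [Hi1 Hi2]; simpl in *.
  - apply sigma_delta; lia.
  - apply (braid_eq_linv_conj n (i, true) (S i, true)); word_ok.
    apply sigma_delta; lia.
Qed.

Lemma word_delta n k w : k < n -> word_ok k w ->
  braid_eq n (w ++ delta k) (delta k ++ wshift w).
Proof.
  intros Hk Hw; apply braid_eq_push_word; word_ok.
  intros x Hx; apply letter_delta; auto.
  eapply Forall_forall; eauto.
Qed.

Lemma delta_delta n m j : m < n -> j < m ->
  braid_eq n (delta m ++ delta (S j)) (delta j ++ delta m ++ [(1, true)]).
Proof.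
  induction j; intros Hm Hj; simpl; [reflexivity|].
  transitivity ((delta m ++ [(S (S j), true)]) ++ delta (S j)).
  { now rewrite <- app_assoc. }
  transitivity (((S j, true) :: delta m) ++ delta (S j)).
  { apply braid_eq_app_r; [word_ok|]; symmetry; apply sigma_delta; lia. }
  apply braid_eq_cons, IHj; word_ok.
Qed.

Lemma sigma_delta_delta n k e : S k < n ->
  braid_eq n ((S k, e) :: delta k ++ delta (S k)) ((delta k ++ delta (S k)) ++ [(1, e)]).
Proof.
  intros Hk.
  assert (Hpos : braid_eq n ((S k, true) :: delta k ++ delta (S k))
                            ((delta k ++ delta (S k)) ++ [(1, true)])).
  { rewrite <- app_assoc; apply (delta_delta n (S k) k); lia. }
  destruct e; [exact Hpos|].
  apply (braid_eq_linv_conj n (S k, true) (1, true)); word_ok.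
Qed.

Lemma conj_shift_stab k w e : word_ok (S k) w ->
  braid_eq (S (S k))
    ((delta k ++ delta (S k)) ++ ((1, e) :: wshift w) ++ winv (delta k ++ delta (S k)))
    ((S k, e) :: delta k ++ w ++ winv (delta k)).
Proof.
  intros Hw; set (g := delta k ++ delta (S k)).
  transitivity (((S k, e) :: g) ++ wshift w ++ winv g).
  { transitivity ((g ++ [(1, e)]) ++ wshift w ++ winv g).
    { now rewrite <- app_assoc. }
    apply braid_eq_app_r; [word_ok|]; symmetry; apply sigma_delta_delta; lia. }
  rewrite <- app_comm_cons; apply braid_eq_cons; [word_ok|].
  transitivity (delta k ++ (w ++ delta (S k)) ++ winv g).
  { unfold g at 1; rewrite <- app_assoc; apply braid_eq_app_l; [word_ok|].
    rewrite app_assoc; apply braid_eq_app_r; [word_ok|].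
    symmetry; apply word_delta; word_ok. }
  unfold g; rewrite winv_app, <- !app_assoc.
  do 2 (apply braid_eq_app_l; [word_ok|]).
  apply (braid_eq_cancel_winv _ []); word_ok.
Qed.

Section ConjugationInvariant.

Variable R : relation (word * nat).
Hypothesis R_braid_eq : forall m w w', 1 < m -> word_ok m w -> word_ok m w' ->
  braid_eq m w w' -> R (w, m) (w', m).
Hypothesis R_conj : forall m a b, 1 < m -> word_ok m a -> word_ok m b ->
  R (b, m) (a ++ b ++ winv a, m).

Let Req := clos_refl_sym_trans _ R.

Lemma shift_stab_equiv k w e : 1 <= k -> word_ok (S k) w ->
  Req ((1, e) :: wshift w, S k + 1) ((S k, e) :: delta k ++ w ++ winv (delta k), S k + 1).
Proof.
  intros Hk Hw; rewrite Nat.add_1_r; eapply rst_trans.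
  - apply rst_step, (R_conj _ (delta k ++ delta (S k))); word_ok.
  - apply rst_step, R_braid_eq; [lia | word_ok | word_ok | now apply conj_shift_stab].
Qed.

Lemma shift_stab_of_markov_stab m w e : 1 < m -> word_ok m w ->
  (forall v, word_ok m v -> R (v, m) ((m, e) :: v, m + 1)) ->
  Req (w, m) ((1, e) :: wshift w, m + 1).
Proof.
  destruct m as [|k]; intros Hm Hw Hstab; [lia|].
  eapply rst_trans; [apply rst_step, (R_conj _ (delta k)); word_ok|].
  eapply rst_trans; [apply rst_step, Hstab; word_ok|].
  apply rst_sym, shift_stab_equiv; word_ok.
Qed.

Lemma markov_stab_of_shift_stab m w e : 1 < m -> word_ok m w ->
  (forall v, word_ok m v -> R (v, m) ((1, e) :: wshift v, m + 1)) ->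
  Req (w, m) ((m, e) :: w, m + 1).
Proof.
  destruct m as [|k]; intros Hm Hw Hstab; [lia|].
  set (v := winv (delta k) ++ w ++ winv (winv (delta k))).
  assert (Hv : word_ok (S k) v) by (subst v; word_ok).
  eapply rst_trans; [apply rst_step, (R_conj _ (winv (delta k))); word_ok|].
  eapply rst_trans; [apply rst_step, Hstab; word_ok|].
  eapply rst_trans; [apply shift_stab_equiv; word_ok|].
  apply rst_step, R_braid_eq; [lia | word_ok | word_ok |].
  apply braid_eq_cons; [word_ok|].
  subst v; rewrite winv_involutive, <- !app_assoc.
  transitivity (w ++ delta k ++ winv (delta k)).
  { apply (braid_eq_cancel_winv _ []); word_ok. }
  rewrite <- (app_nil_r w) at 2; rewrite <- (app_nil_r (winv (delta k))).
  apply braid_eq_cancel_winv; word_ok.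
Qed.

End ConjugationInvariant.

Lemma cong_step_markov p q : cong_step p q -> markov_equiv p q.
Proof.
  intros [m w w' ? ? ? ?|m a b ? ? ?|m w ? ?|m w ? ?];
    try (apply rst_step; constructor; assumption);
    apply shift_stab_of_markov_stab; auto using markov_step.
Qed.

Lemma markov_step_cong p q : markov_step p q -> cong_equiv p q.
Proof.
  intros [m w w' ? ? ? ?|m a b ? ? ?|m w ? ?|m w ? ?];
    try (apply rst_step; constructor; assumption);
    apply markov_stab_of_shift_stab; auto using cong_step.
Qed.

Theorem theorem4p4 : forall p q : word * nat, BB p -> BB q ->
  (cong_equiv p q <-> markov_equiv p q).
Proof.
  (* The two relations agree on all pairs, not only on elements of BB. *)
  intros p q _ _; split; apply (clos_rst_map _ _ (fun x => x)).
  - exact cong_step_markov.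
  - exact markov_step_cong.
Qed.
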